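(* Let $s\ge 1$ and let $a_1,\dots,a_k$ be pairwise coprime positive integers and $d_1,\dots,d_k$ positive integers with $k\le s$ and $a_i,d_i\le 2^s$, such that the minimal polynomial over $\mathbb{Q}$ of the positive real number $\sqrt[d_i]{a_i}$ is $x^{d_i}-a_i$ for each $i$. Let $d=\operatorname{lcm}(d_1,\dots,d_k)$, $\zeta_d=e^{2\pi i/d}$, $K=\mathbb{Q}(\sqrt[d_1]{a_1},\dots,\sqrt[d_k]{a_k},\zeta_d)$. Then there exist integers $c_0,c_1,\dots,c_k$ with $|c_i|\le 2^{4s^2}$ such that $$\theta=c_0\zeta_d+\sum_{i=1}^k c_i\sqrt[d_i]{a_i}$$ is a primitive element of $K$, i.e. $K=\mathbb{Q}(\theta)$, and $\deg\theta\le 2^{2s^2}$.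
   Context: $\deg\theta$ is the degree of the minimal polynomial of $\theta$ over $\mathbb{Q}$. *)

From HB Require Import structures.
From mathcomp Require Import all_boot all_order all_algebra all_field.
Set Implicit Arguments. Unset Strict Implicit. Unset Printing Implicit Defensive.
Import Order.TTheory GRing.Theory Num.Theory.
Local Open Scope ring_scope.

(* We work inside algC, the algebraic closure of Q embedded in C, which
   contains every number field considered in the statement. *)

(* zeta_d = exp(2 pi i / d).  In algC, d.-root (-1) is the d-th root of -1 of
   minimal nonnegative argument, i.e. exp(i pi / d); its square is exp(2 pi i/d). *)
Definition zeta (d : nat) : algC := (d.-root (-1)) ^+ 2.

(* Q(S): the subfield of algC generated over Q by the elements of S,
   i.e. the intersection of all subfields of algC containing S
   (every subfield of algC contains Q). *)
Definition in_Qgen (S : seq algC) (x : algC) : Prop :=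
  forall F : {pred algC}, divring_closed F -> {subset S <= F} -> x \in F.

Definition Qgen_eq (S1 S2 : seq algC) : Prop :=
  forall x, in_Qgen S1 x <-> in_Qgen S2 x.

Definition degQ (x : algC) : nat := (size (minCpoly x)).-1.

From HB Require Import structures.
From mathcomp Require Import all_boot all_order all_algebra all_field.
From mathcomp Require Import zify.
Import Order.TTheory GRing.Theory Num.Theory.
Local Open Scope ring_scope.
Set Implicit Arguments. Unset Strict Implicit. Unset Printing Implicit Defensive.

(* Put g_0 = zeta_D and g_i = a_i^(1/d_i).  Each g_j is a root of some
   X^n_j - b_j with b_j rational, so every automorphism of algC sends the tuple
   (g_j) to one of at most N = D * prod_i d_i <= 2^(2 s^2) tuples of roots.
   Natural coefficients c_j <= N can be chosen off the finitely many hyperplanes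
   sum_j c_j (w_j - g_j) = 0, w one of these tuples distinct from g; then every
   automorphism fixing theta = sum_j c_j g_j fixes all g_j, so by Galois theory
   the g_j are rational polynomials in theta, and theta has at most N conjugates. *)

Local Notation pQtoC := (map_poly (ratr : rat -> algC)).

Lemma num_field_char0 (Qr : fieldExtType rat) : has_char0 Qr.
Proof. by move=> n; rewrite pchar_lalg pchar_num. Qed.

Lemma minPoly_other_root (F0 : fieldType) (L : fieldExtType F0) (K : {subfield L})
    (x : L) (rs : seq L) :
  separable_element K x -> x \notin K ->
  minPoly K x %| \prod_(z <- rs) ('X - z%:P) ->
  exists2 y, root (minPoly K x) y & y != x.
Proof.
move=> sepx Kx /dvdp_prod_XsubC[m Dm].
have {Dm} Dm : minPoly K x = \prod_(z <- mask m rs) ('X - z%:P).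
  by apply/eqP; rewrite -eqp_monic ?monic_minPoly ?monic_prod_XsubC.
have uniq_m : uniq (mask m rs) by rewrite -separable_prod_XsubC -Dm.
have x_m : x \in mask m rs by rewrite -root_prod_XsubC -Dm root_minPoly.
have size_m : size (mask m rs) != 1%N.
  have := size_minPoly K x; rewrite Dm size_prod_XsubC => [[->]].
  by rewrite adjoin_deg_eq1.
suff /hasP[y my neq_yx] : has (predC1 x) (mask m rs).
  by exists y; rewrite // Dm root_prod_XsubC.
apply: contraR size_m => /hasPn all_x.
rewrite eqn_leq (@uniq_leq_size _ _ [:: x]) //=; first by case: (mask m rs) x_m.
by move=> z /all_x /negPn; rewrite inE.
Qed.

Lemma exists_nat_affine_neq0 (R : numDomainType) (I : finType) (P : pred I)
    (a b : I -> R) (N : nat) :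
  (#|P| <= N)%N -> (forall i, P i -> a i != 0 \/ b i != 0) ->
  exists2 c0 : nat, (c0 <= N)%N & forall i, P i -> c0%:R * a i + b i != 0.
Proof.
move=> card_P nz_ab.
(* The product of the nonzero polynomials a_i X + b_i has at most #|P| roots,
   so it cannot vanish at all of 0, ..., N. *)
pose F i : {poly R} := (a i)%:P * 'X + (b i)%:P.
pose Q := \prod_(i | P i) F i.
have size_F i : size (F i) = if (a i == 0) && (b i == 0) then 0%N else (size (a i)%:P).+1.
  by rewrite /F size_MXaddC polyC_eq0.
have nz_Q : Q != 0.
  rewrite prodf_seq_neq0; apply/allP => i _; apply/implyP => Pi.
  by rewrite -size_poly_eq0 size_F; case: (nz_ab i Pi) => /negPf ->; rewrite ?andbF.
have size_Q : (size Q <= N.+1)%N.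
  apply: leq_trans (size_poly_prod_leq _ _) _.
  suff : (\sum_(i | P i) size (F i) <= \sum_(i | P i) 2)%N.
    by rewrite sum_nat_const; lia.
  apply: leq_sum => i _; rewrite size_F; case: ifP => // _.
  by rewrite ltnS size_polyC leq_b1.
pose cands := [seq (n%:R : R) | n <- iota 0 N.+1].
have /allPn[_ /mapP[c0 c0_iota ->] Qc0] : ~~ all (root Q) cands.
  apply/negP => all_roots.
  have uniq_cands : uniq cands.
    by rewrite map_inj_uniq ?iota_uniq // => m n /eqP; rewrite eqr_nat => /eqP.
  have := max_poly_roots nz_Q all_roots uniq_cands.
  by rewrite size_map size_iota ltnNge size_Q.
exists c0; first by move: c0_iota; rewrite mem_iota.
move=> i Pi; move: Qc0; rewrite /root /Q horner_prod prodf_seq_eq0.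
apply: contra => Fi0; apply/hasP; exists i; rewrite ?mem_index_enum //.
by rewrite Pi /F !hornerE mulrC.
Qed.

Lemma exists_nat_lincomb_neq0 (R : numDomainType) (I : finType) (P : pred I)
    (N m : nat) (v : I -> 'I_m -> R) :
  (#|P| <= N)%N -> (forall i, P i -> exists j, v i j != 0) ->
  exists2 c : 'I_m -> nat, (forall j, c j <= N)%N &
    forall i, P i -> \sum_(j < m) (c j)%:R * v i j != 0.
Proof.
elim: m P v => [|m IHm] P v card_P nz_v.
  by exists (fun _ => 0%N) => // i /nz_v[[]].
pose v' i (j : 'I_m) := v i (lift ord0 j).
pose P' := [pred i | P i && [exists j, v' i j != 0]].
have card_P' : (#|P'| <= N)%N.
  apply: leq_trans card_P; apply: subset_leq_card; apply/subsetP => i.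
  by rewrite inE => /andP[].
have nz_v' i : P' i -> exists j, v' i j != 0 by case/andP=> _ /existsP.
have [c' c'_le nz_c'] := IHm P' v' card_P' nz_v'.
pose S i := \sum_(j < m) (c' j)%:R * v' i j.
have nz_vS i : P i -> v i ord0 != 0 \/ S i != 0.
  move=> Pi; have [j nz_vj] := nz_v i Pi.
  case: (unliftP ord0 j) nz_vj => [j' -> | -> ]; [right | by left].
  by apply: nz_c'; rewrite inE Pi; apply/existsP; exists j'.
have [c0 c0_le nz_c0] := exists_nat_affine_neq0 card_P nz_vS.
exists (fun j => if unlift ord0 j is Some j' then c' j' else c0).
  by move=> j; case: (unlift ord0 j).
move=> i Pi; rewrite big_ord_recl unlift_none.
under eq_bigr => j _ do rewrite liftK.
exact: nz_c0.
Qed.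

Lemma splitting_num_field_exists (s : seq algC) :
  {Qr : fieldExtType rat & {QrC : {rmorphism Qr -> algC} &
   {pr : {poly Qr} | pr \is a polyOver 1%VS /\ splittingFieldFor 1 pr fullv &
     forall x, x \in s -> exists2 xx, QrC xx = x & root pr xx}}}.
Proof.
pose p := \prod_(x <- s) sval (minCpolyP x).
have Dp : pQtoC p = \prod_(x <- s) minCpoly x.
  rewrite rmorph_prod; apply: eq_bigr => x _.
  by case: (minCpolyP x) => q [Dq _] _ /=; rewrite Dq.
have monp : pQtoC p \is monic.
  by rewrite Dp monic_prod // => x _; apply: minCpoly_monic.
have [r Dr] := closed_field_poly_normal (pQtoC p : {poly algC}).
rewrite (monicP monp) scale1r in Dr.
have [Qr [QrC [rr Drr genQr]]] := num_field_exists r.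
have QrC_poly (q : {poly rat}) : map_poly QrC (map_poly (in_alg Qr) q) = pQtoC q.
  rewrite -map_poly_comp; apply: eq_map_poly => b.
  by rewrite /= rmorphZ_num rmorph1 mulr1.
exists Qr, QrC, (map_poly (in_alg Qr) p); first split.
- by apply/polyOverP=> i; rewrite coef_map /= memvZ ?memv_line.
- exists rr => //.
  suff ->: map_poly (in_alg Qr) p = \prod_(z <- rr) ('X - z%:P) by apply: eqpxx.
  apply/(map_poly_inj QrC); rewrite QrC_poly Dr -Drr big_map rmorph_prod /=.
  by apply: eq_bigr => zz _; rewrite map_polyXsubC.
- have rootp x : x \in s -> root (pQtoC p) x.
    by move=> sx; rewrite Dp (big_rem x sx) rootM root_minCpoly.
  move=> x sx; have : x \in r by rewrite -root_prod_XsubC -Dr rootp.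
  rewrite -Drr => /mapP[xx _ Dx]; exists xx => //.
  by rewrite -(fmorph_root QrC) QrC_poly -Dx rootp.
Qed.

Lemma polyOver1_map_rat (Qr : fieldExtType rat) (QrC : {rmorphism Qr -> algC})
    (q : {poly Qr}) :
  q \is a polyOver 1%VS -> exists q1 : {poly rat}, map_poly QrC q = pQtoC q1.
Proof.
move=> Qq; have a_ i := sig_eqW (vlineP _ _ (polyOverP Qq i)).
exists (\poly_(i < size q) sval (a_ i)).
apply/polyP=> i; rewrite coef_poly coef_map coef_poly /=.
case: ifP => _; rewrite ?rmorph0 //; case: (a_ i) => a /= ->.
by rewrite alg_num_field fmorph_rat.
Qed.

Lemma kHom_extend_algC (Qr : fieldExtType rat) (QrC : {rmorphism Qr -> algC})
    (pr : {poly Qr}) (E : {subfield Qr}) (f : 'End(Qr)) :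
  pr \is a polyOver 1%VS -> splittingFieldFor 1 pr fullv -> kHom 1 E f ->
  exists nu : {rmorphism algC -> algC}, {in E, forall e, nu (QrC e) = QrC (f e)}.
Proof.
move=> Qpr splitQr homf.
have splitE : splittingFieldFor E pr fullv.
  by apply: (splittingFieldForS (K := 1%AS)) splitQr; rewrite ?sub1v ?subvf.
have [g homg Dg] := kHom_extends (sub1v E) homf Qpr splitE.
pose gRM : {rmorphism Qr -> Qr} :=
  HB.pack (fun_of_lfun g) (GRing.isMonoidMorphism.Build _ _ g (kHom_monoid_morphism homg)).
have [nu Dnu] := extend_algC_subfield_aut QrC gRM.
by exists nu => e Ee; rewrite -Dnu /= Dg.
Qed.

Lemma minPoly_root_aut (Qr : fieldExtType rat) (QrC : {rmorphism Qr -> algC})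
    (pr : {poly Qr}) (E : {subfield Qr}) (x y : Qr) :
  pr \is a polyOver 1%VS -> splittingFieldFor 1 pr fullv -> root (minPoly E x) y ->
  exists nu : {rmorphism algC -> algC},
    nu (QrC x) = QrC y /\ {in E, forall e, nu (QrC e) = QrC e}.
Proof.
move=> Qpr splitQr rooty.
have idE : kHom 1 E \1%VF by apply: kHom1.
have rooty' : root (map_poly \1%VF (minPoly E x)) y.
  by rewrite (@eq_map_poly _ _ _ idfun) ?map_poly_id // => z; rewrite id_lfunE.
have [nu Dnu] := kHom_extend_algC QrC Qpr splitQr (kHomExtendP (sub1v E) idE rooty').
exists nu; split; first by rewrite Dnu ?memv_adjoin // (kHomExtend_val idE).
move=> e Ee; rewrite Dnu; last exact: subvP (subv_adjoin E x) _ Ee.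
by rewrite kHomExtend_id // id_lfunE.
Qed.

Lemma minCpoly_root_aut (x y : algC) :
  root (minCpoly x) y -> exists nu : {rmorphism algC -> algC}, nu x = y.
Proof.
move=> rooty.
have [Qr [QrC [pr [Qpr splitQr] inQr]]] := splitting_num_field_exists [:: x; y].
have [xx Dx _] := inQr x (mem_head _ _).
have [yy Dy _] : exists2 yy, QrC yy = y & root pr yy.
  by apply: inQr; rewrite !inE eqxx orbT.
have rootyy : root (minPoly 1 xx) yy.
  have [q Dq] := polyOver1_map_rat QrC (minPolyOver 1 xx).
  have [p [Dp _] minp] := minCpolyP x.
  have : p %| q by rewrite -minp -Dq -Dx fmorph_root root_minPoly.
  case/dvdpP=> r Dq1; rewrite -(fmorph_root QrC) Dq Dy Dq1 rmorphM rootM.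
  by apply/orP; right; rewrite /= -Dp.
have [nu [Dnu _]] := minPoly_root_aut QrC Qpr splitQr rootyy.
by exists nu; rewrite -Dx -Dy.
Qed.

Lemma aut_fixed_horner (t y : algC) :
  (forall nu : {rmorphism algC -> algC}, nu t = t -> nu y = y) ->
  exists q : {poly rat}, y = (pQtoC q).[t].
Proof.
move=> fix_ty.
have [Qr [QrC [pr [Qpr splitQr] inQr]]] := splitting_num_field_exists [:: t; y].
have [tt Dt _] := inQr t (mem_head _ _).
have [yy Dy rootyy] : exists2 yy, QrC yy = y & root pr yy.
  by apply: inQr; rewrite !inE eqxx orbT.
pose E := <<1; tt>>%AS.
have [Eyy | Eyy] := boolP (yy \in E).
  have [q Dq] := polyOver1_map_rat QrC (Fadjoin_polyOver 1 tt yy).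
  by exists q; rewrite -Dq -Dt horner_map /= Fadjoin_poly_eq.
(* Otherwise a second root of the minimal polynomial of yy over Q(tt) yields
   an automorphism that fixes t and moves y. *)
have [rs Dpr _] := splitQr.
have dvd_pr : minPoly E yy %| \prod_(z <- rs) ('X - z%:P).
  rewrite -(eqp_dvdr _ Dpr); apply: minPoly_dvdp => //.
  exact: polyOverSv (sub1v E) _ Qpr.
have sepyy := pcharf0_separable E (num_field_char0 Qr) yy.
have [y2 rooty2 neq_y2] := minPoly_other_root sepyy Eyy dvd_pr.
have [nu [Dnu fixE]] := minPoly_root_aut QrC Qpr splitQr rooty2.
have /fix_ty : nu t = t by rewrite -Dt fixE ?memv_adjoin.
by rewrite -Dy Dnu => /fmorph_inj/eqP; rewrite (negPf neq_y2).
Qed.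

Lemma minCpoly_separable (x : algC) : separable_poly (minCpoly x).
Proof.
have [Qr [QrC [pr _ inQr]]] := splitting_num_field_exists [:: x].
have [xx Dx _] := inQr x (mem_head _ _).
have [q Dq] := polyOver1_map_rat QrC (minPolyOver 1 xx).
have [p [Dp _] minp] := minCpolyP x.
apply: (@dvdp_separable _ (pQtoC q)).
  by rewrite Dp dvdp_map -minp -Dq -Dx fmorph_root root_minPoly.
rewrite -Dq separable_map.
exact: pcharf0_separable (num_field_char0 Qr) xx.
Qed.

Lemma degQ_le_size (x : algC) (S : seq algC) :
  (forall nu : {rmorphism algC -> algC}, nu x \in S) -> (degQ x <= size S)%N.
Proof.
move=> S_conj; have [r Dr] := closed_field_poly_normal (minCpoly x).
rewrite (monicP (minCpoly_monic x)) scale1r in Dr.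
rewrite /degQ Dr size_prod_XsubC /=; apply: uniq_leq_size.
  by rewrite -separable_prod_XsubC -Dr minCpoly_separable.
move=> z; rewrite -root_prod_XsubC -Dr => /minCpoly_root_aut[nu <-].
exact: S_conj.
Qed.

Section DivringClosedAlgC.

Variable F : {pred algC}.
Hypothesis F_closed : divring_closed F.

(* A keyed copy of F, so that the generic [rpred] lemmas apply to it. *)
Let keyedF : algC -> bool := fun x => x \in F.
HB.instance Definition _ := GRing.isDivringClosed.Build algC keyedF F_closed.

Lemma divring_closed_horner (q : {poly rat}) t : t \in F -> (pQtoC q).[t] \in F.
Proof.
move=> Ft; suff : (pQtoC q).[t] \in keyedF by [].
apply: rpred_horner => //; apply/polyOverP => i; rewrite coef_map /=.
by rewrite /ratr rpred_div ?rpred_int.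
Qed.

Lemma divring_closed_nat_lincomb m (c : 'I_m -> nat) (g : 'I_m -> algC) :
  (forall j, g j \in F) -> \sum_(j < m) (c j)%:R * g j \in F.
Proof.
move=> Fg; suff : \sum_(j < m) (c j)%:R * g j \in keyedF by [].
by apply: rpred_sum => j _; rewrite rpredM ?rpred_nat //; apply: Fg.
Qed.

End DivringClosedAlgC.

Lemma in_Qgen_mem (S : seq algC) x : x \in S -> in_Qgen S x.
Proof. by move=> Sx F _; apply. Qed.

Lemma in_Qgen_trans (S1 S2 : seq algC) x :
  (forall y, y \in S1 -> in_Qgen S2 y) -> in_Qgen S1 x -> in_Qgen S2 x.
Proof. by move=> S12 S1x F F_closed S2F; apply: S1x => // y /S12; apply. Qed.

Lemma Qgen_eq_mutual (S1 S2 : seq algC) :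
  (forall y, y \in S1 -> in_Qgen S2 y) -> (forall y, y \in S2 -> in_Qgen S1 y) ->
  Qgen_eq S1 S2.
Proof. by move=> S12 S21 x; split; apply: in_Qgen_trans. Qed.

Lemma in_Qgen_horner (S : seq algC) (q : {poly rat}) t :
  in_Qgen S t -> in_Qgen S (pQtoC q).[t].
Proof. by move=> St F F_closed SF; apply: divring_closed_horner (St F _ _). Qed.

Lemma in_Qgen_nat_lincomb (S : seq algC) m (c : 'I_m -> nat) (g : 'I_m -> algC) :
  (forall j, in_Qgen S (g j)) -> in_Qgen S (\sum_(j < m) (c j)%:R * g j).
Proof.
by move=> Sg F F_closed SF; apply: divring_closed_nat_lincomb => // j; apply: Sg.
Qed.

Lemma separating_lincomb_exists (m : nat) (g : 'I_m -> algC) (T : finType)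
    (w : T -> 'I_m -> algC) :
  exists2 c : 'I_m -> nat, (forall j, c j <= #|T|)%N &
    forall t, \sum_(j < m) (c j)%:R * w t j = \sum_(j < m) (c j)%:R * g j ->
    forall j, w t j = g j.
Proof.
pose P := [pred t | [exists j, w t j != g j]].
have nz_P t : P t -> exists j, w t j - g j != 0.
  by case/existsP=> j neq_j; exists j; rewrite subr_eq0.
have [c c_le nz_c] := exists_nat_lincomb_neq0 (max_card P) nz_P.
exists c => // t eq_t j; apply/eqP/negP => /negP neq_j.
have /nz_c/eqP[] : P t by apply/existsP; exists j.
by rewrite (eq_bigr _ (fun j _ => mulrBr _ _ _)) sumrB eq_t subrr.
Qed.

Lemma lincomb_primitive_element (m : nat) (g : 'I_m -> algC) (T : finType)
    (w : T -> 'I_m -> algC) :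
  (forall nu : {rmorphism algC -> algC}, exists t, forall j, w t j = nu (g j)) ->
  exists2 c : 'I_m -> nat, (forall j, c j <= #|T|)%N &
    let th := \sum_(j < m) (c j)%:R * g j in
    Qgen_eq [seq g j | j <- enum 'I_m] [:: th] /\ (degQ th <= #|T|)%N.
Proof.
move=> conj_g; have [c c_le sep_c] := separating_lincomb_exists g w.
exists c => // th.
have conj_th (nu : {rmorphism algC -> algC}) : exists t, (forall j, w t j = nu (g j)) /\
                            nu th = \sum_(j < m) (c j)%:R * w t j.
  have [t Dt] := conj_g nu; exists t; split=> //.
  by rewrite rmorph_sum; apply: eq_bigr => j _; rewrite rmorphM rmorph_nat Dt.
split.
  apply: Qgen_eq_mutual => y; [case/mapP=> j _ -> | rewrite inE => /eqP ->].
    have [q ->] : exists q, g j = (pQtoC q).[th].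
      apply: aut_fixed_horner => nu fix_th; have [t [Dt Dth]] := conj_th nu.
      by rewrite -Dt; apply: sep_c; rewrite -Dth fix_th.
    by apply/in_Qgen_horner/in_Qgen_mem; rewrite mem_head.
  apply: in_Qgen_nat_lincomb => j; apply: in_Qgen_mem.
  by apply: map_f; rewrite mem_enum.
pose val t := \sum_(j < m) (c j)%:R * w t j.
rewrite cardE -(size_map val); apply: degQ_le_size => nu.
by have [t [_ ->]] := conj_th nu; apply: map_f; rewrite mem_enum.
Qed.

Lemma XnsubC_root_seq (n : nat) (b : algC) : (0 < n)%N ->
  {r : seq algC | size r = n & forall x, x ^+ n = b -> x \in r}.
Proof.
move=> n_gt0; have [r Dr] := closed_field_poly_normal ('X^n - b%:P : {poly algC}).
rewrite (monicP (monicXnsubC b n_gt0)) scale1r in Dr.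
exists r; first by have := size_XnsubC b n_gt0; rewrite Dr size_prod_XsubC => [[]].
by move=> x xn; rewrite -root_prod_XsubC -Dr /root !hornerE xn subrr.
Qed.

Lemma conjugate_radical_tuples (m : nat) (g b : 'I_m -> algC) (n : 'I_m -> nat) :
  (forall j, 0 < n j)%N -> (forall j, g j ^+ n j = b j) -> (forall j, b j \in Crat) ->
  exists w : {dffun forall j, 'I_(n j)} -> 'I_m -> algC,
    forall nu : {rmorphism algC -> algC}, exists t, forall j, w t j = nu (g j).
Proof.
move=> n_gt0 gX b_rat.
pose r j := s2val (XnsubC_root_seq (b j) (n_gt0 j)).
have size_r j : size (r j) = n j := s2valP (XnsubC_root_seq _ _).
have r_roots j x : x ^+ n j = b j -> x \in r j := s2valP' (XnsubC_root_seq _ _) x.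
exists (fun (t : {dffun forall j, 'I_(n j)}) j => nth 0 (r j) (t j)) => nu.
have lt_index j : (index (nu (g j)) (r j) < n j)%N.
  by rewrite -size_r index_mem r_roots // -rmorphXn gX aut_Crat.
exists (finfun (fun j => Ordinal (lt_index j))) => j.
by rewrite ffunE /= nth_index // -index_mem size_r.
Qed.

Lemma card_dffun_ord (m : nat) (n : 'I_m -> nat) :
  #|{dffun forall j : 'I_m, 'I_(n j)}| = (\prod_(j < m) n j)%N.
Proof.
rewrite card_dep_ffun foldrE big_map big_enum.
by apply: eq_bigr => j _; rewrite card_ord.
Qed.

Lemma radical_primitive_element (m : nat) (g b : 'I_m -> algC) (n : 'I_m -> nat) :
  (forall j, 0 < n j)%N -> (forall j, g j ^+ n j = b j) -> (forall j, b j \in Crat) ->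
  exists2 c : 'I_m -> nat, (forall j, c j <= \prod_(j < m) n j)%N &
    let th := \sum_(j < m) (c j)%:R * g j in
    Qgen_eq [seq g j | j <- enum 'I_m] [:: th] /\ (degQ th <= \prod_(j < m) n j)%N.
Proof.
move=> n_gt0 gX b_rat; have [w conj_g] := conjugate_radical_tuples n_gt0 gX b_rat.
by rewrite -card_dffun_ord; apply: lincomb_primitive_element conj_g.
Qed.

Lemma biglcmn_mul_prod_le (s k : nat) (d : 'I_k -> nat) :
  (k <= s)%N -> (forall i, 0 < d i)%N -> (forall i, d i <= 2 ^ s)%N ->
  (\big[lcmn/1%N]_(i < k) d i * \prod_(i < k) d i <= 2 ^ (2 * s ^ 2))%N.
Proof.
move=> k_le_s d_gt0 d_le.
have prod_le : (\prod_(i < k) d i <= 2 ^ (s ^ 2))%N.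
  apply: (@leq_trans (\prod_(i < k) 2 ^ s)); first exact: leq_prod.
  by rewrite prod_nat_const card_ord -expnM leq_exp2l // mulnC leq_mul2r k_le_s orbT.
have lcm_le : (\big[lcmn/1%N]_(i < k) d i <= \prod_(i < k) d i)%N.
  apply: dvdn_leq; first by rewrite prodn_gt0.
  by apply/dvdn_biglcmP => i _; rewrite (bigD1 i) //= dvdn_mulr.
by rewrite mul2n -addnn expnD leq_mul // (leq_trans lcm_le).
Qed.

Lemma zeta_exprn (d : nat) : (0 < d)%N -> zeta d ^+ d = 1.
Proof. by move=> d_gt0; rewrite /zeta -exprM mulnC exprM rootCK // sqrrN expr1n. Qed.

Unset Implicit Arguments.

Theorem mainTheorem6 (s k : nat) (a d : 'I_k -> nat) :
  (1 <= s)%N ->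
  (k <= s)%N ->
  (forall i, 0 < a i)%N ->
  (forall i, 0 < d i)%N ->
  (forall i j, i != j -> coprime (a i) (a j)) ->
  (forall i, a i <= 2 ^ s)%N ->
  (forall i, d i <= 2 ^ s)%N ->
  (forall i, minCpoly ((d i).-root (a i)%:R) = 'X^(d i) - ((a i)%:R)%:P) ->
  let D := \big[lcmn/1%N]_(i < k) d i in
  let gens := zeta D :: [seq (d i).-root ((a i)%:R : algC) | i <- enum 'I_k] in
  exists (c0 : int) (c : 'I_k -> int),
    (`|c0| <= 2 ^ (4 * s ^ 2))%N /\ (forall i, `|c i| <= 2 ^ (4 * s ^ 2))%N /\
    let theta := c0%:~R * zeta D
                 + \sum_(i < k) (c i)%:~R * (d i).-root ((a i)%:R : algC) in
    Qgen_eq gens [:: theta] /\ (degQ theta <= 2 ^ (2 * s ^ 2))%N.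
Proof.
move=> _ k_le_s _ d_gt0 _ _ d_le _ D gens.
pose g j := if unlift ord0 j is Some i then (d i).-root ((a i)%:R : algC) else zeta D.
pose n j := if unlift ord0 j is Some i then d i else D.
pose b j : algC := if unlift ord0 j is Some i then (a i)%:R else 1.
have D_gt0 : (0 < D)%N.
  by rewrite /D; elim/big_ind: _ => // m1 m2 m1_gt0 m2_gt0; rewrite lcmn_gt0 m1_gt0.
have n_gt0 j : (0 < n j)%N by rewrite /n; case: unlift.
have gX j : g j ^+ n j = b j.
  by rewrite /g /n /b; case: unlift => [i|]; [rewrite rootCK | rewrite zeta_exprn].
have b_rat j : b j \in Crat by rewrite /b; case: unlift => [i|]; rewrite ?rpred_nat ?rpred1.
have [c c_le /= [Qgen_th deg_le]] := radical_primitive_element n_gt0 gX b_rat.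
have prod_n : (\prod_(j < k.+1) n j <= 2 ^ (2 * s ^ 2))%N.
  rewrite big_ord_recl {1}/n unlift_none (eq_bigr d) => [|i _].
    exact: biglcmn_mul_prod_le.
  by rewrite /n liftK.
have c_le4 j : (c j <= 2 ^ (4 * s ^ 2))%N.
  by rewrite (leq_trans (c_le j)) // (leq_trans prod_n) // leq_exp2l // leq_mul2r orbT.
have Dgens : gens = [seq g j | j <- enum 'I_k.+1].
  rewrite enum_ordSl /= /g unlift_none -map_comp; congr (_ :: _).
  by apply: eq_map => i; rewrite /= liftK.
pose c' i : int := c (lift ord0 i).
have Dtheta : (c ord0)%:Z%:~R * zeta D + \sum_(i < k) (c' i)%:~R * (d i).-root (a i)%:R
          = \sum_(j < k.+1) (c j)%:R * g j.
  rewrite big_ord_recl /g unlift_none; congr (_ + _).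
  by apply: eq_bigr => i _; rewrite liftK.
exists (c ord0)%:Z, c'; rewrite Dtheta Dgens.
split; [exact: c_le4 | split=> [i|]; first exact: c_le4].
by split; last exact: leq_trans deg_le prod_n.
Qed.
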